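(* Let $\mathcal H_C$ be a finite-dimensional Hilbert space and let $\{\sigma^{(\mathrm{target})}_{b|x}\}_{b,x\in\{0,1\}}$ be any bipartite assemblage on $\mathcal H_C$. Define the tripartite family $$\sigma^{(\mathrm{initial})}_{a,b|x,y}:=\tfrac12\,\sigma^{(\mathrm{target})}_{b|x\oplus a\oplus y},\qquad a,b,x,y\in\{0,1\}.$$ Likewise, let $P^{(\mathrm{target})}(b,c|x,z)$, with $b,x\in\{0,1\}$ and $c,z$ ranging over finite sets, be any bipartite Bell behavior, and define $$P^{(\mathrm{initial})}(a,b,c|x,y,z):=\tfrac12\,P^{(\mathrm{target})}(b,c|x\oplus a\oplus y,z).$$ Then: (i) applying the wiring $y=a$ yields the targets: $\sum_{a}\sigma^{(\mathrm{initial})}_{a,b|x,a}=\sigma^{(\mathrm{target})}_{b|x}$ and $\sum_a P^{(\mathrm{initial})}(a,b,c|x,a,z)=P^{(\mathrm{target})}(b,c|x,z)$ for all $b,c,x,z$; (ii) $\sigma^{(\mathrm{initial})}$ admits a local hidden-state (LHS) model across the bipartition $AB|C$, and $P^{(\mathrm{initial})}$ admits a local hidden-variable (LHV) model across the bipartition $AB|C$, for every choice of target.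
   Context: $\oplus$ denotes addition modulo 2. A bipartite assemblage $\{\sigma_{b|x}\}$ on $\mathcal H_C$ is a family of positive semidefinite operators on $\mathcal H_C$ such that $\sum_b\sigma_{b|x}$ is a density operator (trace one) independent of $x$. A bipartite Bell behavior $P(b,c|x,z)$ is a family of conditional probability distributions of outputs $(b,c)$ given inputs $(x,z)$ that is non-signaling: $\sum_c P(b,c|x,z)$ is independent of $z$ and $\sum_b P(b,c|x,z)$ is independent of $x$. A tripartite family $\{\sigma_{a,b|x,y}\}$ of positive semidefinite operators on $\mathcal H_C$ admits an LHS model across $AB|C$ if there exist a finite set of values $\lambda$, probabilities $P_\lambda\ge0$ summing to one, conditional probability distributions $P_{a,b|x,y,\lambda}$ (arbitrary, i.e. not required to be non-signaling between $a$ and $b$), and density operators $\varrho_\lambda$ on $\mathcal H_C$ such that $\sigma_{a,b|x,y}=\sum_\lambda P_\lambda P_{a,b|x,y,\lambda}\varrho_\lambda$ for all $a,b,x,y$. A tripartite distribution $P(a,b,c|x,y,z)$ admits an LHV model across $AB|C$ if there exist a finite set of $\lambda$, probabilities $P_\lambda$, arbitrary conditional distributions $P(a,b|x,y,\lambda)$ and conditional distributions $P(c|z,\lambda)$ with $P(a,b,c|x,y,z)=\sum_\lambda P_\lambda P(a,b|x,y,\lambda)P(c|z,\lambda)$. *)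

From HB Require Import structures.
From mathcomp Require Import all_boot all_order all_algebra.
Set Implicit Arguments. Unset Strict Implicit. Unset Printing Implicit Defensive.
Import Order.TTheory GRing.Theory Num.Theory.
Local Open Scope ring_scope.

(* H_C = C^n, C an algebraically closed numeric field (e.g. the complex numbers). *)
Definition adjmx (C : numClosedFieldType) (m n : nat) (A : 'M[C]_(m, n)) : 'M[C]_(n, m) :=
  (map_mx Num.conj A)^T.

Definition psd (C : numClosedFieldType) (n : nat) (A : 'M[C]_n) : Prop :=
  adjmx A = A /\ forall v : 'cV[C]_n, 0 <= ((adjmx v) *m A *m v) ord0 ord0.

Definition density (C : numClosedFieldType) (n : nat) (A : 'M[C]_n) : Prop :=
  psd A /\ \tr A = 1.

Definition assemblage (C : numClosedFieldType) (n : nat)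
  (sigma : bool -> bool -> 'M[C]_n) : Prop :=
  (forall b x, psd (sigma b x)) /\
  exists rho : 'M[C]_n, density rho /\ forall x, \sum_(b : bool) sigma b x = rho.

Definition bell_behavior (R : realFieldType) (Cc Z : finType)
  (P : bool -> Cc -> bool -> Z -> R) : Prop :=
  (forall b c x z, 0 <= P b c x z) /\
  (forall x z, \sum_(b : bool) \sum_(c : Cc) P b c x z = 1) /\
  (forall b x z z', \sum_(c : Cc) P b c x z = \sum_(c : Cc) P b c x z') /\
  (forall c x x' z, \sum_(b : bool) P b c x z = \sum_(b : bool) P b c x' z).

Definition sigma_initial (C : numClosedFieldType) (n : nat)
  (sigma : bool -> bool -> 'M[C]_n) (a b x y : bool) : 'M[C]_n :=
  (1 / 2 : C) *: sigma b (xorb (xorb x a) y).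

Definition P_initial (R : realFieldType) (Cc Z : finType)
  (P : bool -> Cc -> bool -> Z -> R) (a b : bool) (c : Cc) (x y : bool) (z : Z) : R :=
  (1 / 2 : R) * P b c (xorb (xorb x a) y) z.

Definition LHS_model (C : numClosedFieldType) (n : nat)
  (s : bool -> bool -> bool -> bool -> 'M[C]_n) : Prop :=
  exists (L : finType) (pl : L -> C) (pab : L -> bool -> bool -> bool -> bool -> C)
         (rho : L -> 'M[C]_n),
    (forall l, 0 <= pl l) /\ \sum_(l : L) pl l = 1 /\
    (forall l a b x y, 0 <= pab l a b x y) /\
    (forall l x y, \sum_(a : bool) \sum_(b : bool) pab l a b x y = 1) /\
    (forall l, density (rho l)) /\
    (forall a b x y, s a b x y = \sum_(l : L) (pl l * pab l a b x y) *: rho l).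

Definition LHV_model (R : realFieldType) (Cc Z : finType)
  (P : bool -> bool -> Cc -> bool -> bool -> Z -> R) : Prop :=
  exists (L : finType) (pl : L -> R) (pab : L -> bool -> bool -> bool -> bool -> R)
         (pc : L -> Cc -> Z -> R),
    (forall l, 0 <= pl l) /\ \sum_(l : L) pl l = 1 /\
    (forall l a b x y, 0 <= pab l a b x y) /\
    (forall l x y, \sum_(a : bool) \sum_(b : bool) pab l a b x y = 1) /\
    (forall l c z, 0 <= pc l c z) /\
    (forall l z, \sum_(c : Cc) pc l c z = 1) /\
    (forall a b c x y z,
        P a b c x y z = \sum_(l : L) pl l * pab l a b x y * pc l c z).

From HB Require Import structures.
From mathcomp Require Import all_boot all_order all_algebra.
From mathcomp Require Import ring.
Set Implicit Arguments. Unset Strict Implicit. Unset Printing Implicit Defensive.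
Import Order.TTheory GRing.Theory Num.Theory.
Local Open Scope ring_scope.

(* Use the hidden variable l = (b, k) in {0,1}^2, drawn with probability
   tr sigma_{b|k} / 2 (resp. P(b|k) / 2, well defined by no-signalling towards
   B).  Given l and inputs x, y, Alice and Bob deterministically output
   a = x ⊕ y ⊕ k and b, while Charlie holds the normalised state
   sigma_{b|k} / tr sigma_{b|k} (resp. outputs c with probability P(c|b,k,z)).
   For outputs a, b the only compatible l is (b, x ⊕ a ⊕ y), which gives
   1/2 sigma_{b|x⊕a⊕y}.  The wiring y = a cancels the two xors. *)

Section PositiveSemidefinite.
Variables (C : numClosedFieldType) (n : nat).
Implicit Types A : 'M[C]_n.

Lemma adjmxE m p (A : 'M[C]_(m, p)) i j : adjmx A i j = (A j i)^*.
Proof. by rewrite /adjmx !mxE. Qed.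

Lemma adjmxD m p (A B : 'M[C]_(m, p)) : adjmx (A + B) = adjmx A + adjmx B.
Proof. by rewrite /adjmx map_mxD linearD. Qed.

Lemma adjmxZ m p s (A : 'M[C]_(m, p)) : adjmx (s *: A) = s^* *: adjmx A.
Proof. by rewrite /adjmx map_mxZ linearZ. Qed.

Lemma adjmx_delta a : adjmx (delta_mx a 0 : 'cV[C]_n) = delta_mx 0 a.
Proof. by rewrite /adjmx map_delta_mx trmx_delta. Qed.

Lemma form_delta A a b :
  (delta_mx 0 a : 'rV[C]_n) *m A *m (delta_mx b 0 : 'cV[C]_n) = (A a b)%:M.
Proof. by apply/matrixP => i j; rewrite !ord1 -rowE -colE !mxE. Qed.

Lemma form_delta2 A a b s :
  let v : 'cV[C]_n := delta_mx a 0 + s *: delta_mx b 0 in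
  (adjmx v *m A *m v) 0 0 = A a a + s * A a b + s^* * A b a + s^* * s * A b b.
Proof.
rewrite /= adjmxD adjmxZ !adjmx_delta !mulmxDl !mulmxDr.
rewrite -!scalemxAl -!scalemxAr !form_delta !mxE /=.
by rewrite !mulr1n !addrA mulrA.
Qed.

Lemma psd_diag_ge0 A a : psd A -> 0 <= A a a.
Proof.
by case=> _ /(_ (delta_mx a 0)); rewrite adjmx_delta form_delta mxE mulr1n.
Qed.

Lemma psd_tr_ge0 A : psd A -> 0 <= \tr A.
Proof. by move=> psdA; apply: sumr_ge0 => i _; exact: psd_diag_ge0. Qed.

Lemma psd_tr_eq0 A : psd A -> \tr A = 0 -> A = 0.
Proof.
move=> psdA trA0; have [hermA formA] := psdA.
have diag0 a : A a a = 0.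
  exact: (psumr_eq0P (fun i _ => psd_diag_ge0 i psdA) trA0).
apply/matrixP => a b; rewrite mxE; set z := A a b.
have A_ba : A b a = z^* by rewrite -hermA adjmxE.
(* along the direction [e_a - z^* e_b] the form equals [- 2 |z|^2] *)
have := formA (delta_mx a 0 + (- z^*) *: delta_mx b 0).
rewrite form_delta2 !diag0 A_ba -/z.
have -> : 0 + - z^* * z + (- z^*)^* * z^* + (- z^*)^* * - z^* * 0
          = - (z * z^* *+ 2) by rewrite rmorphN /= conjCK; ring.
rewrite oppr_ge0 pmulrn_lle0 // => zz_le0.
by apply/eqP; rewrite -mul_conjC_eq0 eq_le zz_le0 mul_conjC_ge0.
Qed.

Lemma psdZ c A : 0 <= c -> psd A -> psd (c *: A).
Proof.
move=> c_ge0 [hermA formA]; split.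
  by rewrite adjmxZ hermA conj_Creal ?ger0_real.
by move=> v; rewrite -scalemxAr -scalemxAl mxE mulr_ge0.
Qed.

Lemma psd_density_decomposition A (rho0 : 'M[C]_n) :
  psd A -> density rho0 -> exists2 rho, density rho & A = \tr A *: rho.
Proof.
move=> psdA rho0_density; have [trA0 | trA_neq0] := eqVneq (\tr A) 0.
  by exists rho0; rewrite // trA0 scale0r (psd_tr_eq0 psdA trA0).
exists ((\tr A)^-1 *: A); last by rewrite scalerA divff // scale1r.
split; first by apply: psdZ; rewrite // invr_ge0 psd_tr_ge0.
by rewrite mxtraceZ mulVf.
Qed.
End PositiveSemidefinite.

Lemma xorbK x a : xorb (xorb x a) a = x.
Proof. by case: x; case: a. Qed.

Lemma sum_xor_wiring (F : numFieldType) (V : lmodType F) (v : bool -> V) x :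
  \sum_(a : bool) (1 / 2 : F) *: v (xorb (xorb x a) a) = v x.
Proof. by rewrite big_bool /= !xorbK -scalerDl -splitr scale1r. Qed.

Definition xor_output (l : bool * bool) (x y : bool) : bool * bool :=
  (xorb (xorb x y) l.2, l.1).

Lemma xor_output_eq l a b x y :
  ((a, b) == xor_output l x y) = (l == (b, xorb (xorb x a) y)).
Proof. by case: l => b' k; case: a; case: b; case: b'; case: x; case: y; case: k. Qed.

Lemma sum_xor_output (V : nmodType) (F : bool * bool -> V) a b x y :
  \sum_l F l *+ ((a, b) == xor_output l x y) = F (b, xorb (xorb x a) y).
Proof.
under eq_bigr do rewrite xor_output_eq mulrb.
by rewrite -big_mkcond big_pred1_eq.
Qed.

Lemma sum_deterministic (R : pzSemiRingType) (o : bool * bool) :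
  \sum_(a : bool) \sum_(b : bool) ((a, b) == o)%:R = 1 :> R.
Proof.
rewrite pair_bigA /= (bigD1 o) //= -surjective_pairing eqxx big1 ?addr0 //.
by case=> a b /= /negPf ->.
Qed.

Lemma sum_half_stochastic (F : numFieldType) (w : bool * bool -> F) :
  (forall k, \sum_(b : bool) w (b, k) = 1) -> \sum_l w l / 2 = 1.
Proof.
move=> w_sum; rewrite -mulr_suml (eq_bigr (fun l => w (l.1, l.2))); last by case.
rewrite -(pair_bigA _ (fun b k => w (b, k))) /= exchange_big /=.
by under eq_bigr do rewrite w_sum; rewrite sumr_const card_bool divff ?pnatr_eq0.
Qed.

Section Assemblage.
Variables (C : numClosedFieldType) (n : nat).

Lemma LHS_model_xor_mixture (sigma : bool -> bool -> 'M[C]_n)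
    (w : bool * bool -> C) (rho : bool * bool -> 'M[C]_n) :
  (forall l, 0 <= w l) -> (forall k, \sum_(b : bool) w (b, k) = 1) ->
  (forall l, density (rho l)) ->
  (forall b k, sigma b k = w (b, k) *: rho (b, k)) ->
  LHS_model (sigma_initial sigma).
Proof.
move=> w_ge0 w_sum rho_density sigmaE.
exists (bool * bool)%type, (fun l => w l / 2),
  (fun l a b x y => ((a, b) == xor_output l x y)%:R), rho.
split; first by move=> l; rewrite divr_ge0 ?w_ge0.
split; first exact: sum_half_stochastic.
split; first by move=> *; rewrite ler0n.
split; first by move=> l x y; rewrite sum_deterministic.
split=> // a b x y; rewrite /sigma_initial sigmaE.
rewrite -(sum_xor_output (fun l => (1 / 2 : C) *: (w l *: rho l))).
by apply: eq_bigr => l _; rewrite -scaler_nat !scalerA; congr (_ *: _); ring.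
Qed.

Lemma assemblage_LHS_model (sigma : bool -> bool -> 'M[C]_n) :
  assemblage sigma -> LHS_model (sigma_initial sigma).
Proof.
move=> [sigma_psd [rho0 [rho0_density sigma_sum]]].
have /fin_all_exists[rho rhoP] : forall l : bool * bool, exists rho : 'M[C]_n,
    density rho /\ sigma l.1 l.2 = \tr (sigma l.1 l.2) *: rho.
  move=> l.
  have [rho ? ?] := psd_density_decomposition (sigma_psd l.1 l.2) rho0_density.
  by exists rho.
apply: (LHS_model_xor_mixture (w := fun l => \tr (sigma l.1 l.2)) (rho := rho)).
- by move=> l; apply: psd_tr_ge0.
- by move=> k; rewrite -raddf_sum sigma_sum; case: rho0_density.
- by move=> l; case: (rhoP l).
- by move=> b k; case: (rhoP (b, k)).
Qed.
End Assemblage.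

Lemma nonneg_distribution_decomposition (F : numFieldType) (I : finType)
    (f g : I -> F) :
  (forall i, 0 <= f i) -> (forall i, 0 <= g i) -> \sum_i g i = 1 ->
  exists q : I -> F,
    [/\ forall i, 0 <= q i, \sum_i q i = 1 & forall i, f i = (\sum_j f j) * q i].
Proof.
move=> f_ge0 g_ge0 g_sum; have [s0 | s_neq0] := eqVneq (\sum_j f j) 0.
  exists g; split=> // i; rewrite s0 mul0r.
  exact: (psumr_eq0P (fun j _ => f_ge0 j) s0).
exists (fun i => f i / \sum_j f j); split=> [i | | i].
- by rewrite divr_ge0 ?sumr_ge0.
- by rewrite -mulr_suml divff.
- by rewrite mulrC divfK.
Qed.

Section BellBehavior.
Variables (R : realFieldType) (Cc Z : finType).

Lemma LHV_model_xor_mixture (P : bool -> Cc -> bool -> Z -> R)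
    (w : bool * bool -> R) (q : bool * bool -> Cc -> Z -> R) :
  (forall l, 0 <= w l) -> (forall k, \sum_(b : bool) w (b, k) = 1) ->
  (forall l c z, 0 <= q l c z) -> (forall l z, \sum_c q l c z = 1) ->
  (forall b c k z, P b c k z = w (b, k) * q (b, k) c z) ->
  LHV_model (P_initial P).
Proof.
move=> w_ge0 w_sum q_ge0 q_sum PE.
exists (bool * bool)%type, (fun l => w l / 2),
  (fun l a b x y => ((a, b) == xor_output l x y)%:R), q.
split; first by move=> l; rewrite divr_ge0 ?w_ge0.
split; first exact: sum_half_stochastic.
split; first by move=> *; rewrite ler0n.
split; first by move=> l x y; rewrite sum_deterministic.
do 2!split=> //; move=> a b c x y z; rewrite /P_initial PE.
rewrite -(sum_xor_output (fun l => 1 / 2 * (w l * q l c z))).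
by apply: eq_bigr => l _; rewrite -mulr_natr; ring.
Qed.

Lemma bell_marginal_B (P : bool -> Cc -> bool -> Z -> R) :
  bell_behavior P -> exists w : bool * bool -> R,
    [/\ forall l, 0 <= w l, forall k, \sum_(b : bool) w (b, k) = 1
      & forall b k z, \sum_c P b c k z = w (b, k)].
Proof.
move=> [P_ge0 [P_sum [P_nsB _]]].
have [z0 _ | Z0] := pickP (@predT Z).
  exists (fun l => \sum_c P l.1 c l.2 z0); split=> [l | k | b k z] /=.
  - exact: sumr_ge0.
  - exact: P_sum.
  - exact: P_nsB.
(* [Z] is empty, so any marginal will do *)
exists (fun=> 1 / 2); split=> // [l | k | b k z].
- by rewrite divr_ge0.
- by rewrite big_bool /= -splitr.
- by have := Z0 z.
Qed.

Lemma bell_LHV_model (P : bool -> Cc -> bool -> Z -> R) :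
  bell_behavior P -> LHV_model (P_initial P).
Proof.
move=> P_bell; have [w [w_ge0 w_sum wE]] := bell_marginal_B P_bell.
have [P_ge0 [P_sum _]] := P_bell.
have /fin_all_exists[q qP] : forall lz : (bool * bool) * Z, exists q : Cc -> R,
    [/\ forall c, 0 <= q c, \sum_c q c = 1
      & forall c, P lz.1.1 c lz.1.2 lz.2 = w lz.1 * q c].
  move=> [[b k] z].
  have [|||q [q_ge0 q_sum qE]] := nonneg_distribution_decomposition
    (f := fun c => P b c k z) (g := fun c => \sum_b' P b' c k z) => //.
  - by move=> c; apply: sumr_ge0.
  - by rewrite exchange_big P_sum.
  by exists q; split=> // c; rewrite qE wE.
apply: (LHV_model_xor_mixture (w := w) (q := fun l c z => q (l, z) c)) => //.
- by move=> l c z; case: (qP (l, z)) => + _ _; apply.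
- by move=> l z; case: (qP (l, z)).
- by move=> b c k z; case: (qP ((b, k), z)) => _ _; apply.
Qed.
End BellBehavior.

Theorem theorem1 :
  (forall (C : numClosedFieldType) (n : nat) (sigma : bool -> bool -> 'M[C]_n),
     assemblage sigma ->
     (forall b x, \sum_(a : bool) sigma_initial sigma a b x a = sigma b x) /\
     LHS_model (sigma_initial sigma)) /\
  (forall (R : realFieldType) (Cc Z : finType) (P : bool -> Cc -> bool -> Z -> R),
     bell_behavior P ->
     (forall b c x z, \sum_(a : bool) P_initial P a b c x a z = P b c x z) /\
     LHV_model (P_initial P)).
Proof.
split=> [C n sigma sigma_assemblage | R Cc Z P P_bell].
  split; last exact: assemblage_LHS_model.
  by move=> b x; apply: sum_xor_wiring.
split; last exact: bell_LHV_model.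
by move=> b c x z; apply: (sum_xor_wiring (V := R^o) (fun k => P b c k z)).
Qed.
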